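(* Let $X$ be a Polish space, $(Y,d)$ a Polish metric space, $Z$ a topological space, and $P: X \rightsquigarrow Y$ a tight Feller kernel. Let $R \subseteq X \times Z$ and $S \subseteq Y \times Z$ be closed and $\epsilon \ge 0$. Then $$P_{!W}^\epsilon(R \cap P^{*,0}_W S) \subseteq P_{!W}^\epsilon R \cap \{(\nu,z) \in \mathcal{P}(Y) \times Z : \nu \in \mathrm{Cure}_\epsilon(S_z)\}.$$
   Context: $W_1(\mu,\nu) = \inf_{\pi \in \Pi(\mu,\nu)} \int d(y,y')\,d\pi$. For closed $A \subseteq Y$, $\mathcal{P}_A = \{\nu \in \mathcal{P}_1(Y) : \mathrm{supp}(\nu) \subseteq A\}$ ($\mathcal{P}_1$ = probability measures with finite first moment) and $W_1(\mu,\mathcal{P}_A) = \inf_{\nu \in \mathcal{P}_A} W_1(\mu,\nu)$; $\mathrm{Cure}_\epsilon(A) = \{\nu \in \mathcal{P}(Y) : W_1(\nu, \mathcal{P}_A) \le \epsilon\}$. $S_z = \{y : (y,z) \in S\}$. Wasserstein pullback: $P^{*,\eta}_W S = \{(x,z) : W_1(P(x), \mathcal{P}_{S_z}) \le \eta\}$. Wasserstein pushforward: $P_{!W}^\epsilon T = \{(\nu,z) \in \mathcal{P}(Y) \times Z : \exists x,\ (x,z) \in T,\ W_1(P(x),\nu) \le \epsilon\}$. Feller/tight as usual for Markov kernels. *)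

From HB Require Import structures.
From mathcomp Require Import all_boot all_order all_algebra.
From mathcomp Require Import all_classical all_reals all_analysis.
From mathcomp Require Import measurable_realfun.
Set Implicit Arguments.
Unset Strict Implicit.
Unset Printing Implicit Defensive.
Import Order.TTheory GRing.Theory Num.Theory.
Import numFieldNormedType.Exports.
Local Open Scope classical_set_scope.
Local Open Scope ring_scope.

Definition borel (T : ptopologicalType) : measurableType (@open T).-sigma :=
  g_sigma_algebraType (@open T).

Section defs.
Context {R : realType}.

Definition polish_metric {T : topologicalType} (dist : T -> T -> R) : Prop :=
  (forall x y, 0 <= dist x y) /\
      (forall x y, dist x y = 0 <-> x = y) /\
      (forall x y, dist x y = dist y x) /\
      (forall x y z, dist x z <= dist x y + dist y z) /\
      (forall x, nbhs x = filter_from [set e : R | 0 < e]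
                                      (fun e => [set y | dist x y < e])) /\
      (forall u : nat -> T,
          (forall e : R, 0 < e -> exists N, forall m n, (N <= m)%N -> (N <= n)%N ->
                dist (u m) (u n) < e) ->
          exists l, forall e : R, 0 < e -> exists N, forall n, (N <= n)%N ->
                dist (u n) l < e) /\
      (exists D : set T, countable D /\ dense D).

Definition polish_space (T : topologicalType) : Prop :=
  exists dist : T -> T -> R, polish_metric dist.

Section kernel_defs.
Context (X Y : ptopologicalType).

Definition markov_kernel (P : X -> probability (borel Y) R) : Prop :=
  forall A : set (borel Y), measurable A ->
    measurable_fun (setT : set (borel X)) ((fun x => P x A) : borel X -> \bar R).

Definition feller (P : X -> probability (borel Y) R) : Prop :=
  forall f : Y -> R, continuous f -> (exists M : R, forall y, `|f y| <= M) ->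
    continuous (fun x : X => Rintegral (P x) setT (f : borel Y -> R)).

Definition tight_family (F : set (probability (borel Y) R)) : Prop :=
  forall e : R, 0 < e -> exists K : set Y, compact K /\
    forall mu, F mu -> (mu (~` (K : set (borel Y))) <= e%:E)%E.

Definition tight_kernel (P : X -> probability (borel Y) R) : Prop :=
  forall K : set X, compact K -> tight_family (P @` K).
End kernel_defs.

Section wasserstein.
Context (Y : ptopologicalType) (d : Y -> Y -> R).
Local Notation PY := (probability (borel Y) R).

Definition coupling (mu nu : PY) (pi : probability (borel Y * borel Y)%type R)
  : Prop :=
  forall A : set (borel Y), measurable A ->
    pi (A `*` setT) = mu A /\ pi (setT `*` A) = nu A.

Definition W1 (mu nu : PY) : \bar R :=
  ereal_inf [set (\int[pi]_p (d p.1 p.2)%:E)%E | pi in coupling mu nu].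

Definition supp (nu : PY) : set Y :=
  [set y | forall U : set Y, open U -> U y -> (0 < nu (U : set (borel Y)))%E].

Definition finite_first_moment (nu : PY) : Prop :=
  exists y0 : Y, (\int[nu]_y (d y0 y)%:E < +oo)%E.

Definition PA (A : set Y) : set PY :=
  [set nu | finite_first_moment nu /\ supp nu `<=` A].

Definition W1_set (mu : PY) (A : set Y) : \bar R :=
  ereal_inf [set W1 mu nu | nu in PA A].

Definition Cure (eps : R) (A : set Y) : set PY :=
  [set nu | (W1_set nu A <= eps%:E)%E].

Definition section {Z : Type} (S : set (Y * Z)) (z : Z) : set Y :=
  [set y | S (y, z)].
End wasserstein.

Section pull_push.
Context (X Y : ptopologicalType) (Z : Type) (d : Y -> Y -> R)
        (P : X -> probability (borel Y) R).

Definition W_pullback (eta : R) (S : set (Y * Z)) : set (X * Z) :=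
  [set xz | (W1_set d (P xz.1) (section S xz.2) <= eta%:E)%E].

Definition W_pushforward (eps : R) (T : set (X * Z))
  : set (probability (borel Y) R * Z) :=
  [set nz | exists x, T (x, nz.2) /\ (W1 d (P x) nz.1 <= eps%:E)%E].
End pull_push.
End defs.

From HB Require Import structures.
From mathcomp Require Import all_boot all_order all_algebra.
From mathcomp Require Import all_classical all_reals all_analysis.
From mathcomp Require Import measurable_realfun.
From mathcomp Require Import lra.
Import Order.TTheory GRing.Theory Num.Theory.
Local Open Scope classical_set_scope.
Local Open Scope ring_scope.

(* If W_1(P x, P_{S_z}) = 0, then P x itself belongs to P_{S_z}.  Its first
   moment is finite because it lies at finite W_1-distance from a measure with
   finite first moment.  Its support lies in the closed set S_z: a ball of
   radius r and mass a > 0 at distance at least r from S_z forces every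
   coupling with a measure carried by S_z to cost at least r a.  Hence
   W_1(nu, P_{S_z}) <= W_1(nu, P x) = W_1(P x, nu) <= eps. *)

Section measurable_swap_fun.
Context d1 d2 (T1 : measurableType d1) (T2 : measurableType d2).

Definition mswap : T1 * T2 -> T2 * T1 := @unstable.swap T1 T2.

HB.instance Definition _ :=
  isMeasurableFun.Build _ _ _ _ mswap (@measurable_swap _ _ T1 T2).
End measurable_swap_fun.

Section coupling_theory.
Context {R : realType} {Y : ptopologicalType}.
Local Notation PY := (probability (borel Y) R).
Local Notation PY2 := (probability (borel Y * borel Y)%type R).
Local Open Scope ereal_scope.

Lemma coupling_swap [mu nu : PY] [pi : PY2] : coupling mu nu pi ->
  coupling nu mu (distribution pi (@mswap _ _ (borel Y) (borel Y))).
Proof.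
move=> pi_mu_nu A mA; have [piAT piTA] := pi_mu_nu A mA.
rewrite -piAT -piTA /distribution /= /pushforward.
by split; congr (pi _); apply/seteqP; split=> -[a b] //= [].
Qed.

Lemma coupling_integral_fst [mu nu : PY] [pi : PY2] (f : borel Y -> \bar R) :
  coupling mu nu pi -> measurable_fun setT f -> (forall y, 0 <= f y) ->
  \int[pi]_p f p.1 = \int[mu]_y f y.
Proof.
move=> pi_mu_nu mf f0.
have := ge0_integral_pushforward measurable_fst pi measurableT mf
  (fun y _ => f0 y).
rewrite preimage_setT => <-.
apply: eq_measure_integral => A mA _; rewrite /= /pushforward.
rewrite -(proj1 (pi_mu_nu A mA)); congr (pi _).
by apply/seteqP; split=> -[a b] //= [].
Qed.

Lemma coupling_integral_snd [mu nu : PY] [pi : PY2] (f : borel Y -> \bar R) :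
  coupling mu nu pi -> measurable_fun setT f -> (forall y, 0 <= f y) ->
  \int[pi]_p f p.2 = \int[nu]_y f y.
Proof.
move=> pi_mu_nu mf f0.
rewrite -(coupling_integral_fst f (coupling_swap pi_mu_nu)) //.
by rewrite ge0_integral_distribution //; exact: measurableT_comp.
Qed.

Lemma coupling_setX_ge [mu nu : PY] [pi : PY2] (U A : set (borel Y)) :
  coupling mu nu pi -> measurable U -> measurable A -> nu (~` A) = 0 ->
  mu U <= pi (U `*` A).
Proof.
move=> pi_mu_nu mU mA nuA0.
rewrite -(proj1 (pi_mu_nu U mU)).
apply: (@le_trans _ _ (pi ((U `*` A) `|` (setT `*` ~` A)))).
  apply: le_measure; rewrite ?inE.
  - exact: measurableX.
  - by apply: measurableU; apply: measurableX => //; exact: measurableC.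
  - by move=> [u a] /= [Uu _]; have [Aa|nAa] := pselect (A a); [left|right].
apply: le_trans (measureU2 _ _ _) _.
- exact: measurableX.
- by apply: measurableX => //; exact: measurableC.
rewrite [X in _ + X](_ : _ = 0) ?adde0 //.
by rewrite -nuA0; exact: (proj2 (pi_mu_nu _ (measurableC mA))).
Qed.

End coupling_theory.

Lemma natSinv_lt {R : archiRealFieldType} (t : R) :
  0 < t -> exists m : nat, m.+1%:R^-1 < t.
Proof.
move=> t0; have [m _ mt] := near_infty_natSinv_lt (PosNum t0).
by exists m; apply: mt => /=.
Qed.

Section polish_metric_theory.
Context {R : realType} {Y : ptopologicalType} {d : Y -> Y -> R}
  (hY : polish_metric d).
Local Notation PY := (probability (borel Y) R).

Lemma dist_ge0 x y : 0 <= d x y. Proof. by case: hY. Qed.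

Lemma dist_sym x y : d x y = d y x. Proof. by case: hY => _ [_ [+ _]]. Qed.

Lemma dist_triangle x y z : d x z <= d x y + d y z.
Proof. by case: hY => _ [_ [_ [+ _]]]. Qed.

Lemma dist_xx x : d x x = 0.
Proof. by case: hY => _ [+ _] => /(_ x x) [_ ->]. Qed.

Lemma nbhs_dist x (A : set Y) :
  nbhs x A <-> exists2 e : R, 0 < e & [set y | d x y < e] `<=` A.
Proof.
case: hY => _ [_ [_ [_ [-> _]]]].
by split=> -[e e0 eA]; exists e.
Qed.

Lemma open_dist_ball x (r : R) : open [set y | d x y < r].
Proof.
rewrite openE => y /= dxy; apply/nbhs_dist; exists (r - d x y).
  by rewrite subr_gt0.
move=> w /= dyw; apply: le_lt_trans (dist_triangle x y w) _.
by rewrite -ltrBrDl.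
Qed.

Lemma measurable_dist_ball x (r : R) :
  measurable ([set y | d x y < r] : set (borel Y)).
Proof. by apply: sub_sigma_algebra; exact: open_dist_ball. Qed.

Lemma dense_seq_dist : exists e : nat -> Y,
  forall x (r : R), 0 < r -> exists n, d x (e n) < r.
Proof.
case: hY => _ [_ [_ [_ [_ [_ [D [/countable_injP[f finj] denseD]]]]]]].
exists (fun n => xget point [set q | D q /\ f q = n]) => x r r0.
have [q [/= dxq Dq]] : [set y | d x y < r] `&` D !=set0.
  by apply: denseD; [exists x; rewrite /= dist_xx|exact: open_dist_ball].
exists (f q).
have [|Dq' fq'] := xgetPex point (P := [set q' | D q' /\ f q' = f q]).
  by exists q.
by rewrite (finj _ _ _ _ fq') // inE.
Qed.

Lemma measurable_dist_l y0 : measurable_fun setT (fun y : borel Y => d y0 y).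
Proof.
move=> _; apply: (measurability _ (RGenInftyO.measurableE R)) => //.
move=> _ [_ [x ->] <-]; rewrite setTI.
suff -> : (fun y : borel Y => d y0 y) @^-1` `]-oo, x[ = [set y | d y0 y < x].
  exact: measurable_dist_ball.
by apply/seteqP; split => y /=; rewrite in_itv.
Qed.

(* [d p1 p2 < x] iff some ball of a dense sequence, of radius [s], contains p1
   and the ball of radius [x - s] around the same center contains p2. *)
Lemma measurable_dist :
  measurable_fun setT (fun p : (borel Y * borel Y)%type => d p.1 p.2).
Proof.
move=> _; apply: (measurability _ (RGenInftyO.measurableE R)) => //.
move=> _ [_ [x ->] <-]; rewrite setTI.
have [e dense_e] := dense_seq_dist.
pose s (m : nat) : R := m.+1%:R^-1.
suff -> : (fun p : (borel Y * borel Y)%type => d p.1 p.2) @^-1` `]-oo, x[ =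
    \bigcup_n \bigcup_m
      ([set w | d (e n) w < s m] `*` [set w | d (e n) w < x - s m]).
  apply: bigcupT_measurable => n; apply: bigcupT_measurable => m.
  exact: measurableX (measurable_dist_ball _ _) (measurable_dist_ball _ _).
apply/seteqP; split => -[p1 p2] /=; rewrite ?in_itv /=.
- move=> dpx.
  have [m sm] : exists m, s m < (x - d p1 p2) / 2.
    by apply: natSinv_lt; rewrite divr_gt0 // subr_gt0.
  have [n dpe] := dense_e p1 (s m) ltac:(by rewrite invr_gt0).
  exists n => //; exists m => //=; rewrite dist_sym; split => //.
  apply: le_lt_trans (dist_triangle _ p1 _) _; rewrite dist_sym.
  move: (s m) dpe sm => c; lra.
- move=> [n _ [m _ [/= d1 d2]]].
  apply: le_lt_trans (dist_triangle _ (e n) _) _; rewrite dist_sym.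
  by rewrite -(subrK (s m) x) addrC ltrD // -ltrBrDr.
Qed.

Lemma measurable_distE :
  measurable_fun setT (fun p : (borel Y * borel Y)%type => (d p.1 p.2)%:E).
Proof. by apply/measurable_EFinP; exact: measurable_dist. Qed.

Local Open Scope ereal_scope.

(* By separability, the complement of the support is covered by countably many
   null balls. *)
Lemma measure_setC_supp (mu : PY) (A : set Y) :
  closed A -> supp mu `<=` A -> mu (~` A : set (borel Y)) = 0.
Proof.
move=> cA suppA.
have [e dense_e] := dense_seq_dist.
pose B n m : set (borel Y) := [set w | (d (e n) w < m.+1%:R^-1)%R].
pose G n m : set (borel Y) := if mu (B n m) == 0 then B n m else set0.
have [N [mN N0 GN]] : mu.-negligible (\bigcup_n \bigcup_m G n m).
  apply: negligible_bigcup => n; apply: negligible_bigcup => m.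
  exists (G n m); rewrite /G; case: ifPn => [/eqP B0|_].
    by split => //; exact: measurable_dist_ball.
  by split => //; rewrite measure0.
apply/eqP; rewrite eq_le measure_ge0 andbT -N0.
apply: le_measure; rewrite ?inE //.
  by apply: sub_sigma_algebra; exact: closed_openC.
move=> w Aw; apply: GN.
have [U [oU Uw U0]] : exists U : set Y,
    [/\ open U, U w & ~ 0 < mu (U : set (borel Y))].
  apply: contra_notP Aw => noU; apply: suppA => U oU Uw.
  by apply: contra_notP noU; exists U.
have [r r0 /= rU] : exists2 r : R, (0 < r)%R & [set y | (d w y < r)%R] `<=` U.
  by apply/nbhs_dist; move: oU; rewrite openE; apply.
have [m mr] := natSinv_lt (r / 2) ltac:(by rewrite divr_gt0).
have [n dwe] := dense_e w (m.+1%:R^-1)%R ltac:(by rewrite invr_gt0).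
have BU : B n m `<=` U.
  rewrite /B => y /= dey; apply: rU => /=.
  apply: le_lt_trans (dist_triangle _ (e n) _) _.
  move: (m.+1%:R^-1)%R dwe dey mr => c; lra.
have B0 : mu (B n m) = 0.
  apply/eqP; rewrite eq_le measure_ge0 andbT.
  apply: le_trans (le_measure _ _ _ BU) _; rewrite ?inE.
  - exact: measurable_dist_ball.
  - exact: sub_sigma_algebra.
  - by rewrite leNgt; apply/negP.
by exists n => //; exists m => //; rewrite /G B0 eqxx /B /= dist_sym.
Qed.

Lemma W1_sym (mu nu : PY) : W1 d mu nu = W1 d nu mu.
Proof.
suff W1_le (mu' nu' : PY) : W1 d nu' mu' <= W1 d mu' nu'.
  by apply/eqP; rewrite eq_le !W1_le.
apply: ereal_inf_le_tmp => _ [pi pi_mu_nu <-].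
exists (distribution pi (@mswap _ _ (borel Y) (borel Y))).
  exact: coupling_swap.
rewrite ge0_integral_distribution //=.
- by apply: eq_integral => p _; rewrite dist_sym.
- exact: measurable_distE.
- by move=> p; rewrite lee_fin dist_ge0.
Qed.

Lemma finite_first_moment_W1 (mu nu : PY) :
  finite_first_moment d nu -> W1 d mu nu < +oo -> finite_first_moment d mu.
Proof.
move=> [y0 nu_fin] /ereal_inf_lt[_ [pi pi_mu_nu <-] cost_fin]; exists y0.
have md : measurable_fun setT (fun y : borel Y => (d y0 y)%:E).
  by apply/measurable_EFinP; exact: measurable_dist_l.
have d0 x y : 0 <= (d x y)%:E by rewrite lee_fin dist_ge0.
rewrite -(coupling_integral_fst _ pi_mu_nu md) //.
apply: (@le_lt_trans _ _ (\int[pi]_p ((d p.1 p.2)%:E + (d y0 p.2)%:E))).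
  apply: ge0_le_integral => //.
  - exact: measurableT_comp md measurable_fst.
  - apply: emeasurable_funD; first exact: measurable_distE.
    exact: measurableT_comp md measurable_snd.
  - by move=> p _; rewrite -EFinD lee_fin addrC (dist_sym p.1) dist_triangle.
rewrite ge0_integralD //; first last.
- exact: measurableT_comp md measurable_snd.
- exact: measurable_distE.
by rewrite (coupling_integral_snd _ pi_mu_nu md) // lte_add_pinfty.
Qed.

Lemma finite_first_moment_W1_set (mu : PY) (A : set Y) :
  W1_set d mu A < +oo -> finite_first_moment d mu.
Proof.
move=> /ereal_inf_lt[_ [nu [nu_moment _] <-]].
exact: finite_first_moment_W1.
Qed.

Lemma W1_ge_mass (mu nu : PY) (U A : set (borel Y)) (r : R) :
  measurable U -> measurable A -> nu (~` A) = 0 -> (0 <= r)%R ->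
  (forall u a, U u -> A a -> r <= d u a)%R ->
  r%:E * mu U <= W1 d mu nu.
Proof.
move=> mU mA nuA0 r0 rUA; apply/ereal_infP => _ [pi pi_mu_nu <-].
apply: (@le_trans _ _ (r%:E * pi (U `*` A))).
  apply: lee_wpmul2l; first by rewrite lee_fin.
  exact: coupling_setX_ge pi_mu_nu mU mA nuA0.
have mUA : measurable (U `*` A) by exact: measurableX.
rewrite -integral_cst //.
apply: (@le_trans _ _ (\int[pi]_(p in U `*` A) (d p.1 p.2)%:E)).
  apply: ge0_le_integral => //.
  - exact: measurable_funTS measurable_distE.
  - by move=> [u a] [/= Uu Aa]; rewrite lee_fin rUA.
apply: ge0_subset_integral => //; first exact: measurable_distE.
by move=> p _; rewrite lee_fin dist_ge0.
Qed.

Lemma supp_subset_W1_set0 (mu : PY) (A : set Y) :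
  closed A -> W1_set d mu A <= 0 -> supp mu `<=` A.
Proof.
move=> cA W10 y suppy; apply: contrapT => nAy.
have [e e0 eA] : exists2 e : R, (0 < e)%R & [set w | (d y w < e)%R] `<=` ~` A.
  by apply/nbhs_dist; move: (closed_openC cA); rewrite openE; apply.
pose U := [set w | (d y w < e / 2)%R].
have muU0 : 0 < mu U.
  by apply: suppy; [exact: open_dist_ball|rewrite /U /= dist_xx divr_gt0].
suff : (e / 2)%:E * mu U <= 0.
  by rewrite pmule_rle0 ?lte_fin ?divr_gt0 // leNgt muU0.
apply: le_trans W10; apply/ereal_infP => _ [nu [_ suppnu] <-].
apply: (W1_ge_mass mu nu U A).
- exact: measurable_dist_ball.
- rewrite -[A]setCK; apply: measurableC; apply: sub_sigma_algebra.
  exact: closed_openC.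
- exact: measure_setC_supp.
- by rewrite divr_ge0 // ltW.
- move=> u a Uu Aa; rewrite leNgt; apply/negP => dua.
  apply: (eA a) => //=; apply: le_lt_trans (dist_triangle y u a) _.
  by move: Uu; rewrite /U /= => Uu; lra.
Qed.

Lemma PA_W1_set0 (mu : PY) (A : set Y) :
  closed A -> W1_set d mu A <= 0 -> PA d A mu.
Proof.
move=> cA W10; split; last exact: supp_subset_W1_set0.
by apply: finite_first_moment_W1_set; apply: le_lt_trans W10 _; rewrite ltry.
Qed.

Lemma Cure_W1 (mu nu : PY) (A : set Y) (eps : R) :
  PA d A mu -> W1 d mu nu <= eps%:E -> Cure d eps A nu.
Proof.
move=> PAmu W1eps; apply: le_trans W1eps; rewrite W1_sym.
by apply: ereal_inf_lbound; exists mu.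
Qed.

End polish_metric_theory.

Lemma closed_section {Y : ptopologicalType} {Z : topologicalType}
  {S : set (Y * Z)} (z : Z) : closed S -> closed (section S z).
Proof.
move=> cS; apply: (preimage_closed (f := fun y => (y, z))) => // y _.
exact: cvg_pair cvg_id (cvg_cst _).
Qed.

Theorem mainTheorem20 (R : realType) (X Y : ptopologicalType)
  (Z : topologicalType) (d : Y -> Y -> R)
  (P : X -> probability (borel Y) R)
  (hX : polish_space (R := R) X) (hY : polish_metric d)
  (hP : markov_kernel P) (hFeller : feller P) (hTight : tight_kernel P)
  (Rel : set (X * Z)) (S : set (Y * Z)) (hR : closed Rel) (hS : closed S)
  (eps : R) (heps : 0 <= eps) :
  W_pushforward d P eps (Rel `&` W_pullback d P 0 S)
  `<=` W_pushforward d P eps Rel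
       `&` [set nz | Cure d eps (section S nz.2) nz.1].
Proof.
move=> [nu z] /= [x [[Rxz Px_near_S] Px_nu]]; split; first by exists x.
have PA_Px : PA d (section S z) (P x).
  exact: PA_W1_set0 hY _ _ (closed_section z hS) Px_near_S.
exact: Cure_W1 hY _ _ _ _ PA_Px Px_nu.
Qed.
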